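(* Let $L,J\ge0$ be integers and let $Q_{\ell,j}(x)$, $0\le\ell\le L$, $0\le j\le J$, be polynomials with nonnegative coefficients. With the allowed weighted paths defined from these polynomials as in the context, set, for $k\ge0$, \[ F_{k,0}(x)=\sum_{n\ge0}\ \sum_{p\in\mathcal P_{n,k}}w(p)\,x^n,\qquad F(x,u)=\sum_{k\ge0}F_{k,0}(x)u^k , \] where $\mathcal P_{n,k}$ is the multiset of allowed paths from $(0,k)$ to $(n,0)$. Then $F(x,u)$ satisfies \[ F(x,u)=1+x\sum_{\ell=0}^L\sum_{j=0}^J Q_{\ell,j}(x)\,u^j\,\Delta^\ell F(x,u), \] and it is the unique formal power series solution of this equation.
   Context: For $G(x,u)=\sum_{k\ge0}G_k(x)u^k$ and $\ell\ge1$, $\Delta^\ell G(x,u)=\sum_{k\ge0}G_{k+\ell}(x)u^k$, and $\Delta^0G=G$. Step model: for each level $h\ge0$, the multiset $\mathcal S_h$ of steps allowed at level $h$ contains, for every triple $(\ell,j,r)$ with $0\le\ell\le L$, $0\le j\le\min(h,J)$, $r\ge0$ and $[x^r]Q_{\ell,j}(x)\ne0$, one (labelled) step with displacement $(1+r,\ell-j)$ and weight $w=[x^r]Q_{\ell,j}(x)$; distinct triples give distinct elements of the multiset even if their displacements coincide. An allowed path starting at level $k$ is a finite sequence $s_1\cdots s_M$ ($M\ge0$) of labelled steps, visiting the points $(0,k),(0,k)+s_1,(0,k)+s_1+s_2,\dots$, such that each step $s_m$ belongs to $\mathcal S_h$ where $h$ is the second coordinate (level) of the point at which $s_m$ starts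 (levels then automatically stay $\ge0$). Its weight is $w(p)=\prod_{m=1}^M w(s_m)$, the empty path having weight $1$. *)

From HB Require Import structures.
From mathcomp Require Import all_boot all_order all_algebra.
From mathcomp Require Import boolp classical_sets fsbigop.
Set Implicit Arguments. Unset Strict Implicit. Unset Printing Implicit Defensive.
Import Order.TTheory GRing.Theory Num.Theory.
Local Open Scope classical_set_scope.
Local Open Scope ring_scope.

(* A labelled step is a triple (l, j, r): displacement (1 + r, l - j),
   weight [x^r] Q l j. *)
Definition step := (nat * nat * nat)%type.

Section Paths.
Variables (R : numDomainType) (L J : nat) (Q : nat -> nat -> {poly R}).

Definition step_l (s : step) : nat := s.1.1.
Definition step_j (s : step) : nat := s.1.2.
Definition step_r (s : step) : nat := s.2.

Definition step_allowed (h : nat) (s : step) : bool :=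
  [&& (step_l s <= L)%N, (step_j s <= minn h J)%N & (Q (step_l s) (step_j s))`_(step_r s) != 0].

Definition next_level (h : nat) (s : step) : nat := h + step_l s - step_j s.

Fixpoint allowed_path (h : nat) (p : seq step) : bool :=
  if p is s :: p' then step_allowed h s && allowed_path (next_level h s) p'
  else true.

Fixpoint end_level (h : nat) (p : seq step) : nat :=
  if p is s :: p' then end_level (next_level h s) p' else h.

Definition path_xlen (p : seq step) : nat := \sum_(s <- p) (1 + step_r s)%N.

Definition weight (p : seq step) : R :=
  \prod_(s <- p) (Q (step_l s) (step_j s))`_(step_r s).

Definition Paths (n k : nat) : set (seq step) :=
  [set p | allowed_path k p /\ end_level k p = 0%N /\ path_xlen p = n].

(* [x^n] F_{k,0}(x) *)
Definition Fcoef (n k : nat) : R := \sum_(p \in Paths n k) weight p.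

End Paths.

(* Bivariate formal power series: G n k = [x^n u^k] G(x,u). *)
Definition fps2 (R : numDomainType) := nat -> nat -> R.

Section Series.
Variable R : numDomainType.

Definition Fseries (L J : nat) (Q : nat -> nat -> {poly R}) : fps2 R :=
  fun n k => Fcoef L J Q n k.

Definition fps_one : fps2 R := fun n k => ((n == 0%N) && (k == 0%N))%:R.
Definition fps_add (G H : fps2 R) : fps2 R := fun n k => G n k + H n k.
Definition fps_mulx (G : fps2 R) : fps2 R :=
  fun n k => if n is n'.+1 then G n' k else 0.
Definition fps_mulu (j : nat) (G : fps2 R) : fps2 R :=
  fun n k => if (j <= k)%N then G n (k - j)%N else 0.
Definition fps_mulpoly (q : {poly R}) (G : fps2 R) : fps2 R :=
  fun n k => \sum_(i < n.+1) q`_i * G (n - i)%N k.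
(* Delta^l G(x,u) = sum_k G_{k+l}(x) u^k *)
Definition fps_Delta (l : nat) (G : fps2 R) : fps2 R :=
  fun n k => G n (k + l)%N.
Definition fps_sum2 (L J : nat) (T : nat -> nat -> fps2 R) : fps2 R :=
  fun n k => \sum_(l < L.+1) \sum_(j < J.+1) T l j n k.

Definition rhs (L J : nat) (Q : nat -> nat -> {poly R}) (G : fps2 R) : fps2 R :=
  fps_add fps_one
    (fps_mulx (fps_sum2 L J (fun l j => fps_mulpoly (Q l j) (fps_mulu j (fps_Delta l G))))).

Definition solves (L J : nat) (Q : nat -> nat -> {poly R}) (G : fps2 R) : Prop :=
  forall n k, G n k = rhs L J Q G n k.
End Series.

From HB Require Import structures.
From mathcomp Require Import all_boot all_order all_algebra.
From mathcomp Require Import boolp classical_sets fsbigop.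
From mathcomp Require Import zify.
Import Order.TTheory GRing.Theory Num.Theory.
Local Open Scope ring_scope.

(* Every step advances by at least one column, so the paths from (0,k) to
   (n,0) are finitely many and can be listed by choosing a first step
   s = (l, j, r) and then a path from (1 + r, k + l - j).  Since s is allowed
   at level k exactly when l <= L, j <= min(k, J) and [x^r]Q_{l,j} <> 0, this
   splitting gives
     [x^(n+1) u^k] F
       = sum_{l,j} [j <= k] sum_r [x^r]Q_{l,j} [x^(n-r) u^(k-j+l)] F,
   which is the coefficient of x^(n+1) u^k in the equation.  Uniqueness holds
   because the right-hand side in x-degree n only involves coefficients of
   x-degree < n. *)

Section ConsPairs.
Variables (T : eqType) (s : seq T) (t : T -> seq (seq T)).

Lemma mem_allpairs_cons x p :
  (x :: p \in [seq y :: q | y <- s, q <- t y]) = (x \in s) && (p \in t x).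
Proof.
by apply/allpairsPdep/andP => [[y [q [? ? [-> ->]]]] | []]; [|exists x, p].
Qed.

Lemma nil_notin_allpairs_cons : [::] \notin [seq y :: q | y <- s, q <- t y].
Proof. by apply/allpairsPdep => -[? [? [_ _]]]. Qed.

Lemma allpairs_cons_uniq : uniq s -> (forall x, uniq (t x)) ->
  uniq [seq y :: q | y <- s, q <- t y].
Proof.
move=> s_uniq t_uniq; apply: allpairs_uniq_dep => //.
by move=> [x p] [y q] _ _ /= [exy]; subst y => ->.
Qed.

End ConsPairs.

Section PathEnumeration.
Variables (R : numDomainType) (L J : nat) (Q : nat -> nat -> {poly R}).

Definition step_weight (s : step) : R := (Q (step_l s) (step_j s))`_(step_r s).

Lemma weight_cons s p : weight Q (s :: p) = step_weight s * weight Q p.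
Proof. by rewrite /weight big_cons. Qed.

Lemma path_xlen_cons s p : path_xlen (s :: p) = (1 + step_r s + path_xlen p)%N.
Proof. by rewrite /path_xlen big_cons. Qed.

Definition candidate_steps (n : nat) : seq step :=
  [seq (lj, r) | lj <- [seq (l, j) | l <- index_iota 0 L.+1,
                                     j <- index_iota 0 J.+1],
                 r <- index_iota 0 n].

Definition first_steps (k n : nat) : seq step :=
  [seq s <- candidate_steps n | step_allowed L J Q k s].

Lemma candidate_steps_uniq n : uniq (candidate_steps n).
Proof.
apply: allpairs_uniq; rewrite ?iota_uniq //; last by move=> [? ?] [? ?] _ _ /= ->.
apply: allpairs_uniq; rewrite ?iota_uniq //.
by move=> [? ?] [? ?] _ _ /= ->.
Qed.

Lemma mem_first_steps k n s :
  (s \in first_steps k n) = step_allowed L J Q k s && (step_r s < n)%N.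
Proof.
case: s => [[l j] r]; rewrite mem_filter; case allowed: step_allowed => //=.
move: allowed => /and3P[/= lL jkJ _].
have jJ : (j < J.+1)%N by rewrite ltnS (leq_trans jkJ) ?geq_minr.
apply/allpairsP/idP => [[[lj r'] [_ ]] | rn].
  by rewrite mem_index_iota => /andP[_ r'n] [_ ->].
exists ((l, j), r); split; rewrite ?mem_index_iota //.
by apply/allpairsP; exists (l, j); rewrite !mem_index_iota.
Qed.

Fixpoint path_enum (f n k : nat) : seq (seq step) :=
  nseq ((n == 0%N) && (k == 0%N)) [::] ++
  if f is f'.+1 then
    [seq s :: p | s <- first_steps k n,
                  p <- path_enum f' (n - (1 + step_r s)) (next_level k s)]
  else [::].

Lemma path_enum_uniq f n k : uniq (path_enum f n k).
Proof.
elim: f n k => [|f IH] n k /=; first by rewrite cats0; case: (_ && _).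
rewrite cat_uniq allpairs_cons_uniq ?filter_uniq ?candidate_steps_uniq ?andbT //.
apply/andP; split; first by case: (_ && _).
by apply/hasPn => _ /allpairsPdep[s [p [_ _ ->]]]; rewrite mem_nseq andbF.
Qed.

Lemma mem_path_enum f n k p : (n <= f)%N ->
  (p \in path_enum f n k) =
  [&& allowed_path L J Q k p, end_level k p == 0%N & path_xlen p == n].
Proof.
elim: f n k p => [|f IH] n k [|s p] nf /=; rewrite mem_cat mem_nseq /=.
- by rewrite in_nil /path_xlen big_nil; case: n nf k => [|//] _ [].
- rewrite in_nil path_xlen_cons.
  have -> : (1 + step_r s + path_xlen p == n)%N = false by lia.
  by rewrite !andbF.
- rewrite (negbTE (nil_notin_allpairs_cons _ _ _)) /path_xlen big_nil eqxx lt0b.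
  by rewrite andbT orbF [in RHS]andbC eq_sym.
have split_xlen : (step_r s < n)%N && (path_xlen p == n - (1 + step_r s))%N =
                  (1 + step_r s + path_xlen p == n)%N by lia.
rewrite andbF mem_allpairs_cons mem_first_steps IH; last by lia.
rewrite path_xlen_cons -split_xlen /=.
by case: (step_allowed _ _ _ _ _) (allowed_path _ _ _ _ _) (end_level _ _ == 0%N)
  => [] [] []; rewrite /= ?andbF.
Qed.

Lemma Fcoef_enum f n k : (n <= f)%N ->
  Fcoef L J Q n k = \sum_(p <- path_enum f n k) weight Q p.
Proof.
move=> nf; rewrite /Fcoef (fsbig_seq _ _ (path_enum_uniq f n k)) /Paths.
congr (\big[_/_]_(_ \in _) _); apply/funext => p /=; apply/propext.
rewrite mem_path_enum //.
by split => [[-> [-> ->]] | /and3P[-> /eqP -> /eqP ->]]; rewrite ?eqxx.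
Qed.

Lemma Fcoef0 k : Fcoef L J Q 0 k = (k == 0%N)%:R.
Proof.
rewrite (Fcoef_enum 0) //= cats0.
by case: (k == 0%N); rewrite ?big_nil // big_seq1 /weight big_nil.
Qed.

Lemma FcoefS n k : Fcoef L J Q n.+1 k =
  \sum_(s <- first_steps k n.+1)
     step_weight s * Fcoef L J Q (n - step_r s) (next_level k s).
Proof.
rewrite (Fcoef_enum n.+1) //= big_allpairs_dep.
apply: eq_bigr => s _; rewrite (Fcoef_enum n) ?leq_subr // add1n subSS big_distrr.
by apply: eq_bigr => p _; rewrite weight_cons.
Qed.

Lemma big_first_steps k n (F : step -> R) :
  (forall s, step_weight s = 0 -> F s = 0) ->
  \sum_(s <- first_steps k n) F s =
  \sum_(l < L.+1) \sum_(j < J.+1) \sum_(r < n)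
     (if (j <= k)%N then F (l : nat, j : nat, r : nat) else 0).
Proof.
move=> F0; rewrite big_filter big_mkcond !big_allpairs big_mkord.
apply: eq_bigr => l _; rewrite big_mkord; apply: eq_bigr => j _.
rewrite big_mkord; apply: eq_bigr => r _.
have [lL jJ] : (l <= L)%N /\ (j <= J)%N by split; rewrite -ltnS ltn_ord.
rewrite /step_allowed /step_l /step_j /step_r /= lL leq_min jJ andbT.
case: (j <= k)%N => //=; case: eqP => // w0.
by rewrite (F0 (l : nat, j : nat, r : nat)).
Qed.

End PathEnumeration.

Section FunctionalEquation.
Variables (R : numDomainType) (L J : nat) (Q : nat -> nat -> {poly R}).

Lemma rhs0 G k : rhs L J Q G 0 k = (k == 0%N)%:R.
Proof. by rewrite /rhs /fps_add /fps_one /= addr0. Qed.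

Lemma rhsS G n k : rhs L J Q G n.+1 k =
  \sum_(l < L.+1) \sum_(j < J.+1) \sum_(i < n.+1)
     (Q l j)`_i * (if (j <= k)%N then G (n - i)%N (k - j + l)%N else 0).
Proof. by rewrite /rhs /fps_add /fps_one /= add0r. Qed.

Lemma Fseries_solves : solves L J Q (Fseries L J Q).
Proof.
move=> [|n] k; first by rewrite rhs0 /Fseries Fcoef0.
rewrite rhsS /Fseries FcoefS big_first_steps => [|s ->]; last by rewrite mul0r.
apply: eq_bigr => l _; apply: eq_bigr => j _; apply: eq_bigr => r _.
case: leqP => jk; last by rewrite mulr0.
rewrite /step_weight /next_level /step_l /step_j /step_r /=.
by congr (_ * Fcoef _ _ _ _ _); lia.
Qed.

Lemma rhs_eq_lt G H n k :
  (forall m k', (m < n)%N -> G m k' = H m k') ->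
  rhs L J Q G n k = rhs L J Q H n k.
Proof.
case: n => [|n] GH; first by rewrite !rhs0.
rewrite !rhsS; apply: eq_bigr => l _; apply: eq_bigr => j _.
apply: eq_bigr => i _.
by case: ifP => // _; rewrite GH // ltnS leq_subr.
Qed.

Lemma solves_unique G H : solves L J Q G -> solves L J Q H ->
  forall n k, G n k = H n k.
Proof.
move=> solG solH n; elim/ltn_ind: n => n IH k.
by rewrite solG solH; apply: rhs_eq_lt => m k' /IH.
Qed.

End FunctionalEquation.

Theorem lemma1 (R : numDomainType) (L J : nat) (Q : nat -> nat -> {poly R}) :
  (forall l j i, (l <= L)%N -> (j <= J)%N -> 0 <= (Q l j)`_i) ->
  solves L J Q (Fseries L J Q) /\
  (forall G : fps2 R, solves L J Q G -> forall n k, G n k = Fseries L J Q n k).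
Proof.
move=> _; split; first exact: Fseries_solves.
by move=> G solG; apply: solves_unique => //; apply: Fseries_solves.
Qed.
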